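(* Consider a two-player general-sum bimatrix game with payoff matrices $\mathbf{R}=(R_1,R_2)$, together with the risk-averse, boundedly rational objectives and the associated modified 4-player game described in the context. If the modified 4-player game is strictly monotone, i.e. its gradient operator $F(\cdot;\mathbf{R})$ satisfies $(z-z')^T(F(z;\mathbf{R})-F(z';\mathbf{R}))>0$ for all $z\neq z'$ in $\mathcal{Z}$, then the risk-adjusted quantal response equilibrium (RQE) of the original two-player game is unique: any two RQEs of the original game coincide.
   Context: Two players $i\in\{1,2\}$ have finite action sets $\mathcal{A}_1,\mathcal{A}_2$; $-i$ denotes the player other than $i$, and $\Delta_n$ denotes the probability simplex in $\mathbb{R}^n$. The payoff matrices are $R_1\in\mathbb{R}^{|\mathcal{A}_1|\times|\mathcal{A}_2|}$ and $R_2\in\mathbb{R}^{|\mathcal{A}_2|\times|\mathcal{A}_1|}$, where $[R_i]_{mn}$ is the payoff of player $i$ when $i$ plays $m$ and $-i$ plays $n$. For each $i$ fix $\epsilon_i>0$, a differentiable strictly convex function $\nu_i$ (defined on an open set containing $\Delta_{|\mathcal{A}_i|}$), and a differentiable penalty function $D_i:\Delta_{|\mathcal{A}_{-i}|}\times\Delta_{|\mathcal{A}_{-i}|}\to\mathbb{R}$ that is convex in its first argument. Player $i$ chooses a mixed strategy $\pi_i\in\Delta_{|\mathcal{A}_i|}$ to minimize $$f_i(\pi_i,\pi_{-i};R_i)=\sup_{p_i\in\Delta_{|\mathcal{A}_{-i}|}}\big[-\pi_i^TR_ip_i-D_i(p_i,\pi_{-i})\big]+\epsilon_i\nu_i(\pi_i).$$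 An RQE is a pair $(\pi_1^*,\pi_2^* )\in\Delta_{|\mathcal{A}_1|}\times\Delta_{|\mathcal{A}_2|}$ with $f_i(\pi_i^*,\pi_{-i}^*;R_i)\le f_i(\pi_i,\pi_{-i}^*;R_i)$ for all $\pi_i\in\Delta_{|\mathcal{A}_i|}$ and both $i$. The modified 4-player game has joint strategy $z=(\pi_1,\pi_2,p_1,p_2)\in\mathcal{Z}=\Delta_{|\mathcal{A}_1|}\times\Delta_{|\mathcal{A}_2|}\times\Delta_{|\mathcal{A}_2|}\times\Delta_{|\mathcal{A}_1|}$; player $\pi_i$ minimizes $J_i(z)=-\pi_i^TR_ip_i-D_i(p_i,\pi_{-i})+\epsilon_i\nu_i(\pi_i)$ over $\pi_i$, and adversary $p_i$ minimizes $\bar J_i(z)=\pi_i^TR_ip_i+D_i(p_i,\pi_{-i})-\epsilon_i\nu_i(\pi_i)$ over $p_i$. Its gradient operator is $$F(z;\mathbf{R})=\big(-R_1p_1+\epsilon_1\nabla\nu_1(\pi_1),\ -R_2p_2+\epsilon_2\nabla\nu_2(\pi_2),\ R_1^T\pi_1+\nabla_{p_1}D_1(p_1,\pi_2),\ R_2^T\pi_2+\nabla_{p_2}D_2(p_2,\pi_1)\big).$$ *)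

From HB Require Import structures.
From mathcomp Require Import all_boot all_order all_algebra.
From mathcomp Require Import all_classical all_reals all_analysis.
Set Implicit Arguments. Unset Strict Implicit. Unset Printing Implicit Defensive.
Import Order.TTheory GRing.Theory Num.Theory.
Import numFieldNormedType.Exports.
Local Open Scope classical_set_scope.
Local Open Scope ring_scope.

Definition simplex (R : realType) (n : nat) : set 'rV[R]_n :=
  [set x | (forall j, 0 <= x 0 j) /\ \sum_j x 0 j = 1].
Arguments simplex : clear implicits.

Definition dotp (R : realType) (n : nat) (u v : 'rV[R]_n) : R := (u *m v^T) 0 0.

Definition grad (R : realType) (n : nat) (f : 'rV[R]_n -> R) (x : 'rV[R]_n)
  : 'rV[R]_n := \row_j ('d f x (delta_mx 0 j : 'rV[R]_n)).

Definition gradp (R : realType) (m : nat) (D : 'rV[R]_m * 'rV[R]_m -> R)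
  (p q : 'rV[R]_m) : 'rV[R]_m := grad (fun x => D (x, q)) p.

Definition strictly_convex_on (R : realType) (n : nat) (A : set 'rV[R]_n)
  (f : 'rV[R]_n -> R) : Prop :=
  forall x y, A x -> A y -> x <> y -> forall t : R, 0 < t < 1 ->
    f (t *: x + (1 - t) *: y) < t * f x + (1 - t) * f y.

Definition convex_first_arg (R : realType) (m : nat)
  (D : 'rV[R]_m * 'rV[R]_m -> R) : Prop :=
  forall q, simplex R m q -> forall p p', simplex R m p -> simplex R m p' ->
    forall t : R, 0 <= t <= 1 ->
      D (t *: p + (1 - t) *: p', q) <= t * D (p, q) + (1 - t) * D (p', q).

(* f_i(pi_i, pi_{-i}; R_i) = sup_{p in Delta} [- pi^T R p - D(p, pi_{-i})] + eps nu(pi) *)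
Definition fobj (R : realType) (n m : nat) (Rm : 'M[R]_(n, m))
  (D : 'rV[R]_m * 'rV[R]_m -> R) (eps : R) (nu : 'rV[R]_n -> R)
  (pi : 'rV[R]_n) (q : 'rV[R]_m) : R :=
  sup [set - dotp (pi *m Rm) p - D (p, q) | p in simplex R m] + eps * nu pi.

Definition is_RQE (R : realType) (n1 n2 : nat)
  (R1 : 'M[R]_(n1, n2)) (R2 : 'M[R]_(n2, n1))
  (D1 : 'rV[R]_n2 * 'rV[R]_n2 -> R) (D2 : 'rV[R]_n1 * 'rV[R]_n1 -> R)
  (eps1 eps2 : R) (nu1 : 'rV[R]_n1 -> R) (nu2 : 'rV[R]_n2 -> R)
  (pi1 : 'rV[R]_n1) (pi2 : 'rV[R]_n2) : Prop :=
  [/\ simplex R n1 pi1, simplex R n2 pi2,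
      (forall pi1', simplex R n1 pi1' ->
         fobj R1 D1 eps1 nu1 pi1 pi2 <= fobj R1 D1 eps1 nu1 pi1' pi2) &
      (forall pi2', simplex R n2 pi2' ->
         fobj R2 D2 eps2 nu2 pi2 pi1 <= fobj R2 D2 eps2 nu2 pi2' pi1)].

(* (z - z')^T (F(z;R) - F(z';R)) for z = (pi1, pi2, p1, p2). *)
Definition F_pairing (R : realType) (n1 n2 : nat)
  (R1 : 'M[R]_(n1, n2)) (R2 : 'M[R]_(n2, n1))
  (D1 : 'rV[R]_n2 * 'rV[R]_n2 -> R) (D2 : 'rV[R]_n1 * 'rV[R]_n1 -> R)
  (eps1 eps2 : R) (nu1 : 'rV[R]_n1 -> R) (nu2 : 'rV[R]_n2 -> R)
  (pi1 : 'rV[R]_n1) (pi2 : 'rV[R]_n2) (p1 : 'rV[R]_n2) (p2 : 'rV[R]_n1)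
  (pi1' : 'rV[R]_n1) (pi2' : 'rV[R]_n2) (p1' : 'rV[R]_n2) (p2' : 'rV[R]_n1) : R :=
  let F1 pi1 p1 := - (p1 *m R1^T) + eps1 *: grad nu1 pi1 in
  let F2 pi2 p2 := - (p2 *m R2^T) + eps2 *: grad nu2 pi2 in
  let F3 pi1 pi2 p1 := pi1 *m R1 + gradp D1 p1 pi2 in
  let F4 pi1 pi2 p2 := pi2 *m R2 + gradp D2 p2 pi1 in
  dotp (pi1 - pi1') (F1 pi1 p1 - F1 pi1' p1')
  + dotp (pi2 - pi2') (F2 pi2 p2 - F2 pi2' p2')
  + dotp (p1 - p1') (F3 pi1 pi2 p1 - F3 pi1' pi2' p1')
  + dotp (p2 - p2') (F4 pi1 pi2 p2 - F4 pi1' pi2' p2').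

From HB Require Import structures.
From mathcomp Require Import all_boot all_order all_algebra.
From mathcomp Require Import all_classical all_reals all_analysis.
From mathcomp Require Import lra.
Import Order.TTheory GRing.Theory Num.Theory.
Import numFieldNormedType.Exports.
Local Open Scope classical_set_scope.
Local Open Scope ring_scope.

(** An RQE [(pi1, pi2)] is completed to a point [z = (pi1, pi2, p1, p2)] of
  the 4-player game satisfying the variational inequalities in the direction
  of a given [z'].  The adversary's [p_i] maximises the differentiable map
  [p |-> - pi_i R_i p - D_i (p, pi_-i)] over the simplex, whence
  [(p' - p_i) . F_(p_i) z >= 0]; among these maximisers a Danskin-type
  argument (compactness, plus the first-order expansion of [nu_i] along the
  segment from [pi_i] to [pi_i']) selects one with
  [(pi_i' - pi_i) . F_(pi_i) z >= 0].  Doing this at two RQEs, each towards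
  the other, and adding the eight inequalities gives
  [(z - z')^T (F z - F z') <= 0], so strict monotonicity forces [z = z']. *)

Section DotProduct.
Context {R : realType} {n : nat}.
Implicit Types (u v w : 'rV[R]_n).

Lemma dotpE u v : dotp u v = \sum_j u 0 j * v 0 j.
Proof. by rewrite /dotp mxE; apply: eq_bigr => j _; rewrite mxE. Qed.

Lemma dotpC u v : dotp u v = dotp v u.
Proof. by rewrite !dotpE; apply: eq_bigr => j _; rewrite mulrC. Qed.

Lemma dotpDl u v w : dotp (u + v) w = dotp u w + dotp v w.
Proof. by rewrite !dotpE -big_split; apply: eq_bigr => j _; rewrite mxE mulrDl. Qed.

Lemma dotpNl u v : dotp (- u) v = - dotp u v.
Proof. by rewrite !dotpE -sumrN; apply: eq_bigr => j _; rewrite mxE mulNr. Qed.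

Lemma dotpZl a u v : dotp (a *: u) v = a * dotp u v.
Proof. by rewrite !dotpE mulr_sumr; apply: eq_bigr => j _; rewrite mxE mulrA. Qed.

Lemma dotpDr u v w : dotp u (v + w) = dotp u v + dotp u w.
Proof. by rewrite dotpC dotpDl !(dotpC _ u). Qed.

Lemma dotpNr u v : dotp u (- v) = - dotp u v.
Proof. by rewrite dotpC dotpNl dotpC. Qed.

Lemma dotpZr a u v : dotp u (a *: v) = a * dotp u v.
Proof. by rewrite dotpC dotpZl dotpC. Qed.

Lemma dotpBr u v w : dotp u (v - w) = dotp u v - dotp u w.
Proof. by rewrite dotpDr dotpNr. Qed.

Lemma dotp_mul_trmx m u (p : 'rV[R]_m) (M : 'M[R]_(n, m)) :
  dotp u (p *m M^T) = dotp (u *m M) p.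
Proof. by rewrite /dotp trmx_mul trmxK mulmxA. Qed.

Lemma dotp_grad (f : 'rV[R]_n -> R) x v : dotp v (grad f x) = 'd f x v.
Proof.
rewrite dotpE {2}(row_sum_delta v) linear_sum; apply: eq_bigr => j _.
by rewrite linearZ /= mxE.
Qed.

Lemma dotp_variational_pair_le {a a' X X' : 'rV[R]_n} :
  0 <= dotp (a' - a) X -> 0 <= dotp (a - a') X' -> dotp (a - a') (X - X') <= 0.
Proof. by rewrite dotpBr -opprB dotpNl; lra. Qed.

Lemma dotp_continuous u : continuous (dotp u).
Proof.
have -> : dotp u = fun v => \sum_j u 0 j * v 0 j.
  by apply/funext => v; rewrite dotpE.
apply: continuous_big => [|j _ v]; first exact: add_continuous.
exact: cvgMl_tmp (@coord_continuous R 1 n 0 j v).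
Qed.

End DotProduct.

Section Simplex.
Context {R : realType} {n : nat}.

Lemma simplex_le1 (p : 'rV[R]_n) j : simplex R n p -> p 0 j <= 1.
Proof.
by move=> [p0 <-]; rewrite (bigD1 j) //= lerDl sumr_ge0 // => i _; exact: p0.
Qed.

Lemma dotp_simplex_le (v : 'rV[R]_n) {p} : simplex R n p ->
  `|dotp v p| <= \sum_j `|v 0 j|.
Proof.
move=> Sp; have [p0 _] := Sp.
rewrite dotpE; apply: le_trans (ler_norm_sum _ _ _) _.
apply: ler_sum => j _; rewrite normrM (ger0_norm (p0 j)).
by rewrite ler_piMr // simplex_le1.
Qed.

Lemma simplex_segment {x y : 'rV[R]_n} t : simplex R n x -> simplex R n y ->
  0 <= t <= 1 -> simplex R n (t *: (y - x) + x).
Proof.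
move=> [x0 x1] [y0 y1] /andP[t0 t1]; split.
  by move=> j; rewrite !mxE; have := x0 j; have := y0 j => ? ?; nra.
rewrite (eq_bigr (fun j => t * y 0 j + (1 - t) * x 0 j)); last first.
  by move=> j _; rewrite !mxE; lra.
by rewrite big_split /= -!mulr_sumr x1 y1; lra.
Qed.

Lemma simplex_closed : closed (simplex R n).
Proof.
have sum_cont : continuous (fun x : 'rV[R]_n => \sum_j x 0 j).
  apply: continuous_big => [|j _]; first exact: add_continuous.
  exact: coord_continuous.
have -> : simplex R n = \bigcap_j ((fun x => x 0 j) @^-1` [set y | 0 <= y])
                        `&` (fun x => \sum_j x 0 j) @^-1` [set 1].
  by apply/seteqP; split => x [x0 x1]; split => // j; [move=> _|]; exact: x0.
apply: closedI.
  apply: closed_bigI => j _; apply: preimage_closed; last exact: closed_ge.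
  by move=> x _; exact: coord_continuous.
by apply: preimage_closed; [move=> x _; exact: sum_cont | exact: closed_eq].
Qed.

Lemma simplex_compact : compact (simplex R n).
Proof.
apply: subclosed_compact simplex_closed
  (rV_compact (fun=> @segment_compact R 0 1)) _.
move=> v Sv j /=; have [v0 _] := Sv.
by rewrite in_itv /= v0 simplex_le1.
Qed.

End Simplex.

Section Analysis.
Context {R : realType}.

Lemma compact_nested_cluster {T : topologicalType} {S : set T}
    {K : R -> set T} :
  compact S -> (forall e, 0 < e -> K e !=set0) ->
  (forall a b, a <= b -> K a `<=` K b) -> (forall e, K e `<=` S) ->
  exists2 p, S p & forall e, 0 < e -> closure (K e) p.
Proof.
move=> cS K0 Kmono KS.
pose F := filter_from [set e : R | 0 < e] K.
have FF : ProperFilter F.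
  apply: filter_from_proper; last by move=> e /K0.
  apply: filter_from_filter.
    by exists 1; rewrite /= ltr01.
  move=> a b a0 b0; exists (Order.min a b); first by rewrite /= lt_min a0 b0.
  by move=> p Kp; split; apply: Kmono Kp; rewrite ge_min lexx ?orbT.
have [p [Sp clp]] := cS F FF (ex_intro2 _ _ 1 ltr01 (KS 1)).
by exists p => // e e0 B pB; apply: clp pB; exists e.
Qed.

Lemma le_of_closure {T : topologicalType} {f : T -> R} {K : R -> set T} {c p} :
  {for p, continuous f} -> (forall e, 0 < e -> closure (K e) p) ->
  (forall e x, 0 < e -> K e x -> f x <= c + e) -> f p <= c.
Proof.
move=> fp clp Kle; apply/ler_addgt0Pr => e e0.
have e2 : 0 < e / 2 by rewrite divr_gt0.
have [x [Kx]] := clp _ e2 _ (proj1 (cvgrPdist_lt _ _) fp _ e2).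
by have := Kle _ _ e2 Kx; rewrite /= ltr_norml => ? /andP[? ?]; lra.
Qed.

Lemma cvg_right_diff_quotient {V : normedModType R} {f : V -> R} {a} v :
  differentiable f a ->
  (fun h : R => h^-1 * (f (h *: v + a) - f a)) @ 0^'+ --> 'd f a v.
Proof.
move=> df; rewrite -deriveE //; apply: cvg_dnbhs_at_right.
exact: diff_derivable.
Qed.

Lemma differentiable_partial_fst {X Y Z : normedModType R} (D : X * Y -> Z) p q :
  differentiable D (p, q) -> differentiable (fun y => D (y, q)) p.
Proof.
by move=> dD; apply: (differentiable_comp (f := fun y => (y, q))).
Qed.

Lemma differentiable_partial_fst_on {X Y Z : normedModType R} {D : X * Y -> Z}
    {A : set X} {B : set Y} {U : set (X * Y)} :
  A `*` B `<=` U -> (forall x, U x -> differentiable D x) ->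
  forall q, B q -> forall p, A p -> differentiable (fun y => D (y, q)) p.
Proof. by move=> ABU dD q Bq p Ap; apply/differentiable_partial_fst/dD/ABU. Qed.

End Analysis.

Section AdversaryResponse.
Context {R : realType} {n m : nat}.
Variables (Rm : 'M[R]_(n, m)) (phi : 'rV[R]_m -> R).
Hypothesis phi_diff : forall p, simplex R m p -> differentiable phi p.
Hypothesis simplex_neq0 : simplex R m !=set0.

(* With [phi := D (., q)], [fobj Rm D eps nu x q = adv_value x + eps * nu x]. *)
Definition adv_payoff (x : 'rV[R]_n) (p : 'rV[R]_m) : R :=
  - dotp (x *m Rm) p - phi p.

Definition adv_value (x : 'rV[R]_n) : R :=
  sup [set adv_payoff x p | p in simplex R m].

Lemma adv_payoff_continuous x {p} : simplex R m p ->
  {for p, continuous (adv_payoff x)}.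
Proof.
move=> Sp; apply: (@cvgB _ _ _ (nbhs p) (nbhs_filter p)
  (fun y => - dotp (x *m Rm) y) phi).
  apply: (@cvgN _ _ _ (nbhs p) (nbhs_filter p) (fun y => dotp (x *m Rm) y)).
  exact: dotp_continuous.
by have := differentiable_continuous (phi_diff _ Sp).
Qed.

Lemma adv_value_has_sup x : has_sup [set adv_payoff x p | p in simplex R m].
Proof.
split; first by have [q Sq] := simplex_neq0; exists (adv_payoff x q), q.
have cont : {within simplex R m, continuous (adv_payoff x)}.
  by apply: continuous_in_subspaceT => p /[1!inE] /adv_payoff_continuous; exact.
have [B [_ HB]] := compact_bounded (continuous_compact cont simplex_compact).
exists (B + 1) => y Sy; apply: le_trans (ler_norm y) _.
by apply: HB Sy; rewrite ltrDl.
Qed.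

Lemma adv_payoff_le_value x {p} : simplex R m p -> adv_payoff x p <= adv_value x.
Proof. by move=> Sp; apply: sup_upper_bound (adv_value_has_sup x) _ _; exists p. Qed.

Lemma adv_payoff_shift x d t p :
  adv_payoff (t *: d + x) p = adv_payoff x p - t * dotp (d *m Rm) p.
Proof. by rewrite /adv_payoff mulmxDl -scalemxAl dotpDl dotpZl; lra. Qed.

Lemma adv_argmax_first_order x p p' : simplex R m p -> simplex R m p' ->
  (forall y, simplex R m y -> adv_payoff x y <= adv_payoff x p) ->
  0 <= dotp (p' - p) (x *m Rm + grad phi p).
Proof.
move=> Sp Sp' p_max; set e := p' - p.
have d_ge : - dotp (x *m Rm) e <= 'd phi p e.
  apply: cvgr_to_ge (cvg_right_diff_quotient e (phi_diff _ Sp)) _.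
  near=> s.
  have s0 : 0 < s by near: s; exact: nbhs_right_gt.
  have s01 : 0 <= s <= 1.
    by rewrite ltW //= ltW //; near: s; apply: nbhs_right_lt; exact: ltr01.
  have := p_max _ (simplex_segment s Sp Sp' s01).
  by rewrite /adv_payoff dotpDr dotpZr ler_pdivlMl //; lra.
by rewrite dotpDr dotp_grad dotpC; lra.
Unshelve. all: by end_near.
Qed.

Context {eps : R} {nu : 'rV[R]_n -> R} { pi pi' : 'rV[R]_n }.
Hypotheses (nu_diff : differentiable nu pi)
  (Spi : simplex R n pi) (Spi' : simplex R n pi').
Hypothesis pi_opt : forall x, simplex R n x ->
  adv_value pi + eps * nu pi <= adv_value x + eps * nu x.

Let d := pi' - pi.
Let w := d *m Rm.
Let M : R := \sum_j `|w 0 j|.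

(* These sets are nonempty (take a short step from [pi] towards [pi']) and
   shrink with [e]; by compactness they have a common cluster point. *)
Let approx_adv_argmax (e : R) := [set p | [/\ simplex R m p,
  dotp w p <= eps * 'd nu pi d + e &
  forall p', simplex R m p' -> adv_payoff pi p' <= adv_payoff pi p + e]].

(* Optimality of [pi] against the step [t *: d + pi], evaluated at a
   [t^2]-approximate worst-case response [p] to the step. *)
Lemma approx_adv_argmax_step {t p} : 0 < t < 1 -> simplex R m p ->
  adv_value (t *: d + pi) - t ^+ 2 < adv_payoff (t *: d + pi) p ->
  dotp w p < t + eps * (t^-1 * (nu (t *: d + pi) - nu pi)) /\
  forall p', simplex R m p' ->
    adv_payoff pi p' <= adv_payoff pi p + t * (2 * M + 1).
Proof.
move=> t01 Sp near_max; have /andP[t0 t1] := t01.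
have St : simplex R n (t *: d + pi) by apply: simplex_segment; rewrite ?ltW.
have opt := pi_opt _ St.
have le_value := adv_payoff_le_value pi Sp.
rewrite adv_payoff_shift in near_max; split.
  by rewrite -(ltr_pM2l t0) mulrDr mulrCA mulVKf ?gt_eqF // -expr2; lra.
move=> p' Sp'.
have := adv_payoff_le_value (t *: d + pi) Sp'; rewrite adv_payoff_shift.
have wM : dotp w p' - dotp w p <= 2 * M.
  have := dotp_simplex_le w Sp; have := dotp_simplex_le w Sp'.
  by rewrite /M !ler_norml => /andP[? ?] /andP[? ?]; lra.
have := ler_wpM2l (ltW t0) wM.
have : t ^+ 2 <= t by rewrite expr2 ger_pMr // ltW.
lra.
Qed.

Lemma approx_adv_argmax_nonempty e : 0 < e -> approx_adv_argmax e !=set0.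
Proof.
move=> e0.
have quot_cvg :
    (fun t => eps * (t^-1 * (nu (t *: d + pi) - nu pi))) @ 0^'+ -->
    eps * 'd nu pi d.
  exact: cvgMl_tmp (cvg_right_diff_quotient d nu_diff).
have M0 : 0 <= M by apply: sumr_ge0.
have e2 : 0 < e / 2 by rewrite divr_gt0.
have : \forall t \near 0^'+, [/\ 0 < t < 1, t < e / (2 * M + 2) &
    `|eps * 'd nu pi d - eps * (t^-1 * (nu (t *: d + pi) - nu pi))| < e / 2].
  near=> t; split.
  - apply/andP; split; near: t; first exact: nbhs_right_gt.
    by apply: nbhs_right_lt; exact: ltr01.
  - by near: t; apply: nbhs_right_lt; rewrite divr_gt0 //; lra.
  - by near: t; exact: (proj1 (cvgrPdist_lt _ _) quot_cvg _ e2).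
move=> /filter_ex [t [t01 te near_c]]; have /andP[t0 _] := t01.
have [_ [p Sp <-] near_max] :=
  sup_adherent (exprn_gt0 2 t0) (adv_value_has_sup (t *: d + pi)).
have [w_le max_le] := approx_adv_argmax_step t01 Sp near_max.
have tM : 0 <= t * M by rewrite mulr_ge0 // ltW.
move: te near_c; rewrite ltr_pdivlMr ?ltr_norml; last lra.
move=> te /andP[? ?]; exists p; split => // [|p' Sp']; first lra.
by have := max_le _ Sp'; lra.
Unshelve. all: by end_near.
Qed.

Lemma approx_adv_argmax_mono a b :
  a <= b -> approx_adv_argmax a `<=` approx_adv_argmax b.
Proof.
move=> ab p [Sp wp p_max]; split => // [|p' Sp']; first lra.
by have := p_max p' Sp'; lra.
Qed.

Lemma exists_adv_argmax_dir_bound : exists p, [/\ simplex R m p,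
  forall p', simplex R m p' -> adv_payoff pi p' <= adv_payoff pi p &
  dotp w p <= eps * 'd nu pi d].
Proof.
have [p Sp clp] := compact_nested_cluster simplex_compact
  approx_adv_argmax_nonempty approx_adv_argmax_mono (fun e p => fun '(And3 Sp _ _) => Sp).
exists p; split => //; last first.
  by apply: le_of_closure (dotp_continuous w p) clp _ => e y _ [].
move=> p' Sp'; rewrite -lerN2.
apply: (le_of_closure (f := fun y => - adv_payoff pi y) _ clp).
  exact: continuousN (adv_payoff_continuous pi Sp).
by move=> e y _ [_ _ /(_ p' Sp')]; lra.
Qed.

Lemma exists_adv_argmax_first_order : exists p, [/\ simplex R m p,
  0 <= dotp (pi' - pi) (- (p *m Rm^T) + eps *: grad nu pi) &
  forall p', simplex R m p' -> 0 <= dotp (p' - p) (pi *m Rm + grad phi p)].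
Proof.
have [p [Sp p_max w_le]] := exists_adv_argmax_dir_bound.
exists p; split => // [|p' Sp']; last exact: adv_argmax_first_order.
by move: w_le; rewrite /w /d dotpDr dotpNr dotpZr dotp_grad dotp_mul_trmx; lra.
Qed.

End AdversaryResponse.

Lemma fobj_argmin_first_order {R : realType} {n m : nat}
    {Rm : 'M[R]_(n, m)} {D : 'rV[R]_m * 'rV[R]_m -> R} {eps : R}
    {nu : 'rV[R]_n -> R} { pi pi' : 'rV[R]_n } {q : 'rV[R]_m} :
  (forall p, simplex R m p -> differentiable (fun y => D (y, q)) p) ->
  differentiable nu pi -> simplex R n pi -> simplex R n pi' -> simplex R m q ->
  (forall x, simplex R n x -> fobj Rm D eps nu pi q <= fobj Rm D eps nu x q) ->
  exists p, [/\ simplex R m p,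
    0 <= dotp (pi' - pi) (- (p *m Rm^T) + eps *: grad nu pi) &
    forall p', simplex R m p' -> 0 <= dotp (p' - p) (pi *m Rm + gradp D p q)].
Proof.
move=> dD dnu Spi Spi' Sq pi_opt.
by apply: (exists_adv_argmax_first_order Rm (fun y => D (y, q)) dD
  (ex_intro _ q Sq) dnu Spi Spi').
Qed.

Theorem proposition1 (R : realType) (n1 n2 : nat)
  (R1 : 'M[R]_(n1, n2)) (R2 : 'M[R]_(n2, n1))
  (eps1 eps2 : R) (nu1 : 'rV[R]_n1 -> R) (nu2 : 'rV[R]_n2 -> R)
  (D1 : 'rV[R]_n2 * 'rV[R]_n2 -> R) (D2 : 'rV[R]_n1 * 'rV[R]_n1 -> R) :
  0 < eps1 -> 0 < eps2 ->
  (exists U : set 'rV[R]_n1, [/\ open U, simplex R n1 `<=` U &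
     forall x, U x -> differentiable nu1 x]) ->
  (exists U : set 'rV[R]_n2, [/\ open U, simplex R n2 `<=` U &
     forall x, U x -> differentiable nu2 x]) ->
  strictly_convex_on (simplex R n1) nu1 ->
  strictly_convex_on (simplex R n2) nu2 ->
  (exists U : set ('rV[R]_n2 * 'rV[R]_n2),
     [/\ open U, simplex R n2 `*` simplex R n2 `<=` U &
         forall x, U x -> differentiable D1 x]) ->
  (exists U : set ('rV[R]_n1 * 'rV[R]_n1),
     [/\ open U, simplex R n1 `*` simplex R n1 `<=` U &
         forall x, U x -> differentiable D2 x]) ->
  convex_first_arg D1 -> convex_first_arg D2 ->
  (* strict monotonicity of the gradient operator F(.; R) on Z *)
  (forall (pi1 pi1' : 'rV[R]_n1) (pi2 pi2' : 'rV[R]_n2)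
          (p1 p1' : 'rV[R]_n2) (p2 p2' : 'rV[R]_n1),
     simplex R n1 pi1 -> simplex R n2 pi2 -> simplex R n2 p1 -> simplex R n1 p2 ->
     simplex R n1 pi1' -> simplex R n2 pi2' -> simplex R n2 p1' -> simplex R n1 p2' ->
     (pi1, pi2, p1, p2) <> (pi1', pi2', p1', p2') ->
     0 < F_pairing R1 R2 D1 D2 eps1 eps2 nu1 nu2 pi1 pi2 p1 p2 pi1' pi2' p1' p2') ->
  forall (pi1 pi1' : 'rV[R]_n1) (pi2 pi2' : 'rV[R]_n2),
    is_RQE R1 R2 D1 D2 eps1 eps2 nu1 nu2 pi1 pi2 ->
    is_RQE R1 R2 D1 D2 eps1 eps2 nu1 nu2 pi1' pi2' ->
    pi1 = pi1' /\ pi2 = pi2'.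
Proof.
move=> _ _ [U1 [_ SU1 dU1]] [U2 [_ SU2 dU2]] _ _ [V1 [_ SV1 dV1]]
  [V2 [_ SV2 dV2]] _ _ F_mono pi1 pi1' pi2 pi2' [S1 S2 o1 o2] [S1' S2' o1' o2'].
have dD1 := differentiable_partial_fst_on SV1 dV1.
have dD2 := differentiable_partial_fst_on SV2 dV2.
have [p1 [Sp1 A1 B1]] := fobj_argmin_first_order (dD1 _ S2)
  (dU1 _ (SU1 _ S1)) S1 S1' S2 o1.
have [p2 [Sp2 A2 B2]] := fobj_argmin_first_order (dD2 _ S1)
  (dU2 _ (SU2 _ S2)) S2 S2' S1 o2.
have [p1' [Sp1' A1' B1']] := fobj_argmin_first_order (dD1 _ S2')
  (dU1 _ (SU1 _ S1')) S1' S1 S2' o1'.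
have [p2' [Sp2' A2' B2']] := fobj_argmin_first_order (dD2 _ S1')
  (dU2 _ (SU2 _ S2')) S2' S2 S1' o2'.
have F_le0 : F_pairing R1 R2 D1 D2 eps1 eps2 nu1 nu2
    pi1 pi2 p1 p2 pi1' pi2' p1' p2' <= 0.
  have := lerD (lerD (lerD (dotp_variational_pair_le A1 A1')
    (dotp_variational_pair_le A2 A2'))
    (dotp_variational_pair_le (B1 _ Sp1') (B1' _ Sp1)))
    (dotp_variational_pair_le (B2 _ Sp2') (B2' _ Sp2)).
  by rewrite !addr0.
apply: contrapT => neq_RQE.
have neq_z : (pi1, pi2, p1, p2) <> (pi1', pi2', p1', p2').
  by case=> eq1 eq2 _ _; exact: neq_RQE.
have := F_mono _ _ _ _ _ _ _ _ S1 S2 Sp1 Sp2 S1' S2' Sp1' Sp2' neq_z.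
by rewrite ltNge F_le0.
Qed.
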